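(* Let $\lambda>1$ and let $(a_n)_{n\ge1}$, $(b_n)_{n\ge1}$ be real sequences with $a\doteq\sup_{n\ge1}a_n<\infty$ and $b_n\ge0$ for all $n$. Assume $a\ge(\lambda-1)[1-\ln(\lambda-1)]$ and let $u^*$ be the smallest positive fixed point of $f(u)=u^{\lambda}e^{a-u}$. Let $\{x_n\}$ be a non-negative solution of $$x_{n+1}=x_{n-1}^{\lambda}e^{a_n-b_nx_n-x_{n-1}},\qquad n\ge1.$$ If $x_k\in(0,u^* )$ for some $k\ge0$, then the terms $x_k,x_{k+2},x_{k+4},\dots$ are strictly decreasing and converge to $0$.
   Context: When $\lambda>1$ and $a\ge(\lambda-1)[1-\ln(\lambda-1)]$, the map $f(u)=u^\lambda e^{a-u}$ on $[0,\infty)$ has at least one positive fixed point; $u^*$ denotes the smallest one (the Allee fixed point of $f$). *)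

From Stdlib Require Import Reals Lra.
Open Scope R_scope.

(* Real power u^y for u >= 0, with the convention 0^y = 0 (y > 0 in use).
   Stdlib's Rpower 0 y = exp (y * ln 0) = 1, so we patch the value at 0. *)
Definition rpow (u y : R) : R := if Rle_dec u 0 then 0 else Rpower u y.

Definition fmap (lam a u : R) : R := rpow u lam * exp (a - u).

Definition smallest_pos_fixed_point (lam a u : R) : Prop :=
  0 < u /\ fmap lam a u = u /\
  (forall v, 0 < v -> fmap lam a v = v -> u <= v).

(* On the interval between 0 and u* the map f lies strictly below the
   identity: near 0 because lambda > 1, and on the whole interval because a
   crossing would be a fixed point smaller than u*.  Since a_n <= a and b_n x_n >= 0, every second step
   of the recurrence satisfies x_{n+1} <= f(x_{n-1}), so the even-offset
   subsequence from x_k decreases; its limit L is >= 0 and satisfies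
   L <= f(L), which forces L = 0. *)
From Stdlib Require Import Reals Lra Lia.
Open Scope R_scope.

Definition fpos (lam a t : R) : R := exp (lam * ln t + (a - t)).

Lemma fmap_fpos lam a t : 0 < t -> fmap lam a t = fpos lam a t.
Proof.
  intros Ht; unfold fmap, fpos, rpow.
  destruct (Rle_dec t 0); [lra|].
  unfold Rpower; rewrite <- exp_plus; reflexivity.
Qed.

Lemma continuity_pt_fpos lam a t : 0 < t -> continuity_pt (fpos lam a) t.
Proof.
  intros Ht; unfold fpos.
  apply (continuity_pt_comp (fun t => lam * ln t + (a - t)) exp).
  - apply continuity_pt_plus.
    + apply continuity_pt_mult; [now apply continuity_pt_const|].
      apply derivable_continuous_pt; exists (/ t); now apply derivable_pt_lim_ln.
    + apply continuity_pt_minus; [now apply continuity_pt_const|].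
      apply derivable_continuous_pt, derivable_pt_id.
  - apply derivable_continuous_pt, derivable_pt_exp.
Qed.

Lemma fpos_lt_id_near_0 lam a u : 1 < lam -> 0 < u ->
  exists e, 0 < e < u /\ fpos lam a e < e.
Proof.
  intros Hl Hu.
  set (c := exp (- a / (lam - 1))).
  assert (Hc : 0 < c) by apply exp_pos.
  set (e := Rmin (u / 2) (c / 2)).
  assert (He : 0 < e) by (apply Rmin_pos; lra).
  assert (Heu : e < u) by (pose proof (Rmin_l (u / 2) (c / 2)); unfold e; lra).
  assert (Hec : e < c) by (pose proof (Rmin_r (u / 2) (c / 2)); unfold e; lra).
  assert (Hln : ln e < - a / (lam - 1)).
  { rewrite <- (ln_exp (- a / (lam - 1))); now apply ln_increasing. }
  assert (Hln' : (lam - 1) * ln e < - a).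
  { apply Rmult_lt_compat_l with (r := lam - 1) in Hln; [|lra].
    replace ((lam - 1) * (- a / (lam - 1))) with (- a) in Hln by (field; lra).
    exact Hln. }
  exists e; split; [lra|].
  rewrite <- (exp_ln e) at 2 by exact He.
  unfold fpos; apply exp_increasing; nra.
Qed.

Lemma fpos_lt_id_below_fixed_point lam a ustar u :
  1 < lam -> smallest_pos_fixed_point lam a ustar ->
  0 < u < ustar -> fpos lam a u < u.
Proof.
  intros Hl [_ [_ Hmin]] Hu.
  assert (Hno_fix : forall z, 0 < z < ustar -> fpos lam a z <> z).
  { intros z Hz Hfz.
    enough (ustar <= z) by lra.
    apply Hmin; [lra|]; now rewrite fmap_fpos by lra. }
  destruct (Rlt_or_le (fpos lam a u) u) as [Hlt|Hge]; [exact Hlt|].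
  destruct (Rle_lt_or_eq_dec _ _ Hge) as [Hgt|Heq];
    [|exfalso; apply (Hno_fix u Hu); lra].
  destruct (fpos_lt_id_near_0 lam a u Hl (proj1 Hu)) as [e [He Hfe]].
  destruct (Ranalysis5.IVT_interv (fun t => fpos lam a t - t) e u)
    as [z [Hz Hfz]]; try lra.
  - intros t Ht; apply continuity_pt_minus.
    + apply continuity_pt_fpos; lra.
    + apply derivable_continuous_pt, derivable_pt_id.
  - exfalso; apply (Hno_fix z); lra.
Qed.

Lemma rpow_exp_le_fpos lam a v c d :
  0 < v -> c <= a -> 0 <= d ->
  0 < rpow v lam * exp (c - d - v) <= fpos lam a v.
Proof.
  intros Hv Hc Hd; unfold rpow, fpos, Rpower.
  destruct (Rle_dec v 0); [lra|].
  rewrite <- exp_plus; split; [apply exp_pos|].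
  assert (Hle : lam * ln v + (c - d - v) <= lam * ln v + (a - v)) by lra.
  destruct (Rle_lt_or_eq_dec _ _ Hle) as [Hlt | ->]; [|lra].
  left; now apply exp_increasing.
Qed.

Section DominatedOrbit.

Variables (g : R -> R) (c : R) (y : nat -> R).
Hypothesis g_cont : forall t, 0 < t -> continuity_pt g t.
Hypothesis g_lt_id : forall t, 0 < t < c -> g t < t.
Hypothesis y0_bounds : 0 < y 0 < c.
Hypothesis y_step : forall j, 0 < y j -> 0 < y (S j) /\ y (S j) <= g (y j).

Lemma dominated_orbit_bounds j : 0 < y j < c.
Proof.
  induction j as [|j IH]; [exact y0_bounds|].
  destruct (y_step j (proj1 IH)); pose proof (g_lt_id _ IH); lra.
Qed.

Lemma dominated_orbit_decreasing j : y (S j) < y j.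
Proof.
  pose proof (dominated_orbit_bounds j) as Hj.
  destruct (y_step j (proj1 Hj)); pose proof (g_lt_id _ Hj); lra.
Qed.

Lemma dominated_orbit_cv_0 : Un_cv y 0.
Proof.
  assert (Hdec : Un_decreasing y) by (intro n; left; apply dominated_orbit_decreasing).
  assert (Hlb : has_lb y).
  { exists 0; intros z [n ->]; unfold opp_seq.
    pose proof (dominated_orbit_bounds n); lra. }
  destruct (decreasing_cv y Hdec Hlb) as [L HL].
  assert (HL0 : 0 <= L).
  { apply (@Rle_cv_lim (fun _ => 0) y 0 L); [| |exact HL].
    - intro n; pose proof (dominated_orbit_bounds n); lra.
    - intros eps Heps; exists 0%nat; intros n _; now rewrite R_dist_eq. }
  assert (HLc : L < c).
  { pose proof (decreasing_ineq y L Hdec HL 0%nat); pose proof (dominated_orbit_bounds 0%nat); lra. }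
  destruct (Rle_lt_or_eq_dec 0 L HL0) as [Hpos|<-]; [exfalso|exact HL].
  assert (Hshift : Un_cv (fun j => y (S j)) L).
  { intros eps Heps; destruct (HL eps Heps) as [N HN].
    exists N; intros n Hn; apply HN; lia. }
  assert (HgL : L <= g L).
  { apply (@Rle_cv_lim (fun j => y (S j)) (fun j => g (y j)) L (g L)); [| exact Hshift |].
    - intro n; apply (y_step n (proj1 (dominated_orbit_bounds n))).
    - now apply continuity_seq; [apply g_cont|]. }
  pose proof (g_lt_id L (conj Hpos HLc)); lra.
Qed.

End DominatedOrbit.

Theorem mainTheorem7
  (lam : R) (as_ bs : nat -> R) (a ustar : R) (x : nat -> R) (k : nat) :
  1 < lam ->
  is_lub (fun y => exists n : nat, (1 <= n)%nat /\ y = as_ n) a ->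
  (forall n : nat, (1 <= n)%nat -> 0 <= bs n) ->
  (lam - 1) * (1 - ln (lam - 1)) <= a ->
  smallest_pos_fixed_point lam a ustar ->
  (forall n : nat, 0 <= x n) ->
  (forall n : nat, (1 <= n)%nat ->
     x (S n) = rpow (x (n - 1)%nat) lam * exp (as_ n - bs n * x n - x (n - 1)%nat)) ->
  0 < x k < ustar ->
  (forall j : nat, x (k + 2 * S j)%nat < x (k + 2 * j)%nat) /\
  Un_cv (fun j : nat => x (k + 2 * j)%nat) 0.
Proof.
  (* The bound on [a] only serves to make [ustar] exist, which is assumed here. *)
  intros Hl [Ha_ub _] Hb _ Hustar Hx Hrec Hk.
  set (y := fun j => x (k + 2 * j)%nat).
  assert (Hy0 : 0 < y 0%nat < ustar) by (unfold y; rewrite Nat.add_0_r; exact Hk).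
  assert (Hstep : forall j, 0 < y j -> 0 < y (S j) /\ y (S j) <= fpos lam a (y j)).
  { intros j Hyj; unfold y in *.
    replace (k + 2 * S j)%nat with (S (S (k + 2 * j))) by lia.
    rewrite Hrec by lia; rewrite Nat.sub_succ, Nat.sub_0_r.
    apply rpow_exp_le_fpos; [exact Hyj | |].
    - apply Ha_ub; exists (S (k + 2 * j)); split; [lia | reflexivity].
    - apply Rmult_le_pos; [apply Hb; lia | apply Hx]. }
  pose proof (fun u => fpos_lt_id_below_fixed_point lam a ustar u Hl Hustar)
    as Hbelow.
  split.
  - exact (dominated_orbit_decreasing _ _ y Hbelow Hy0 Hstep).
  - exact (dominated_orbit_cv_0 _ _ y (continuity_pt_fpos lam a) Hbelow Hy0 Hstep).
Qed.
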